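(* Let $T_3$ be the tree with vertices $w,x,y,z,u_1,a_1,b_1,u_2,a_2,b_2$ and edges $wx,xy,yz,zu_1,u_1a_1,u_1b_1,zu_2,u_2a_2,u_2b_2$. Let $v$ be a vertex of $T_3$, $S$ a $\Delta_S$-star with $\Delta_S\ge 3$, and $G=T_3\rhd_v S$ a graph of order $n$ and maximum degree $\Delta\ge 3$. Then $\gamma^{\rm ID}(G)\le \left(\frac{\Delta-1}{\Delta}\right)n$.
   Context: An identifying code of a graph $G$ is a set $C\subseteq V(G)$ such that every vertex $v$ has $N[v]\cap C\neq\emptyset$ and for all distinct $u,v$, $N[u]\cap C \ne N[v]\cap C$, where $N[v]$ is the closed neighborhood; $\gamma^{\rm ID}(G)$ is its minimum size. A $k$-star is $K_{1,k}$. For a graph $G'$, a vertex $v$ of $G'$ and a star $S$, $G'\rhd_v S$ is the graph obtained from the disjoint union of $G'$ and $S$ by identifying $v$ with a leaf of $S$. *)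

(* Finite simple graphs as symmetric irreflexive relations on a finType. *)
From mathcomp Require Import all_boot.
Set Implicit Arguments. Unset Strict Implicit. Unset Printing Implicit Defensive.

Section Graphs.
Variable V : finType.
Variable e : rel V.

Definition cnbhd (v : V) : {set V} := [set y | (y == v) || e v y].

Definition deg (v : V) : nat := #|[set y | e v y]|.
Definition maxdeg : nat := \max_(x : V) deg x.

Definition is_id_codeb (C : {set V}) : bool :=
  [forall v, cnbhd v :&: C != set0] &&
  [forall u, forall v, (u != v) ==> (cnbhd u :&: C != cnbhd v :&: C)].

(* gamma^ID : minimum size of an identifying code (default #|V|.+1 if none exists) *)
Definition gammaID : nat :=
  \big[minn/#|V|.+1]_(C : {set V} | is_id_codeb C) #|C|.
End Graphs.

Definition gorder (V : finType) (e : rel V) : nat := #|V|.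
Arguments gorder [V] e.

(* G' |>_v S for the star S = K_{1,k} (k >= 1): vertices are those of G' (inl),
   the centre of S (inr None) and the k-1 leaves of S other than the one
   identified with v (inr (Some j)). *)
Definition attach_star (V : finType) (e : rel V) (v : V) (k : nat)
  : rel (V + option 'I_k.-1)%type :=
  fun x y =>
    match x, y with
    | inl a, inl b => e a b
    | inl a, inr None => a == v
    | inr None, inl a => a == v
    | inr None, inr (Some _) => true
    | inr (Some _), inr None => true
    | _, _ => false
    end.

(* The tree T_3 on 'I_10 with labelling
   w=0, x=1, y=2, z=3, u1=4, a1=5, b1=6, u2=7, a2=8, b2=9. *)
Definition T3_edges : seq (nat * nat) :=
  [:: (0,1); (1,2); (2,3); (3,4); (4,5); (4,6); (3,7); (7,8); (7,9)].

Definition T3 : rel 'I_10 :=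
  fun a b => ((nat_of_ord a, nat_of_ord b) \in T3_edges) ||
             ((nat_of_ord b, nat_of_ord a) \in T3_edges).

Arguments attach_star [V] e v k .

(* Let c be the centre of S.  If a set A of vertices of T3 contains v,
   dominates T3 and separates any two vertices of T3 other than v, then A
   together with c and all leaves of S but one is an identifying code of G:
   c tells v apart from the rest of T3, and the omitted leaf is the only vertex
   whose trace is {c}.  Such an A exists for every v and misses at least four
   vertices of T3, or three when v = z, in which case v has degree 4 in G.
   So gamma^ID(G) <= n - m, where m is one more than the number of missing
   vertices, and n = Delta_S + 10 <= m Delta because Delta >= Delta_S >= 3
   (and Delta >= 4 when m = 4); this rearranges to the claimed bound. *)

From HB Require Import structures.
From mathcomp Require Import all_boot zify.

Set Implicit Arguments.
Unset Strict Implicit.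
Unset Printing Implicit Defensive.

Lemma card_sum_pred (T1 T2 : finType) (A : {pred T1 + T2}) :
  #|A| = #|[pred a | inl a \in A]| + #|[pred b | inr b \in A]|.
Proof. by rewrite !cardE /enum_mem !size_filter [in LHS]unlock count_cat !count_map. Qed.

Lemma card_option_pred (T : finType) (A : {pred option T}) :
  #|A| = (None \in A) + #|[pred a | Some a \in A]|.
Proof. by rewrite !cardE /enum_mem !size_filter [in LHS]unlock /= count_map. Qed.

HB.instance Definition _ := SemiGroup.isComLaw.Build nat minn minnA minnC.

Section IdentifyingCodes.
Variables (V : finType) (e : rel V).

Lemma is_id_codebP (C : {set V}) :
  reflect ((forall x, cnbhd e x :&: C != set0) /\ injective (fun x => cnbhd e x :&: C))
          (is_id_codeb e C).
Proof.
apply: (iffP andP) => [[/forallP dom /'forall_forallP sep]|[dom inj]]; split=> //.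
- by move=> x y Cxy; apply/eqP; move: (sep x y); rewrite Cxy eqxx implybF negbK.
- by apply/forallP.
- by apply/'forall_forallP => x y; apply/implyP; apply: contra => /eqP/inj->.
Qed.

Lemma gammaID_le_card (C : {set V}) : is_id_codeb e C -> gammaID e <= #|C|.
Proof. by move=> idC; rewrite /gammaID (bigD1 C) //= geq_minl. Qed.

Lemma leq_deg_maxdeg x : deg e x <= maxdeg e.
Proof. exact: leq_bigmax. Qed.

End IdentifyingCodes.

Section AttachStar.
Variables (V : finType) (e : rel V) (v : V) (k : nat).
Local Notation G := (attach_star e v k).

Lemma gorder_attach_star : 0 < k -> gorder G = #|V| + k.
Proof. by move=> k_gt0; rewrite /gorder card_sum card_option card_ord prednK. Qed.

Lemma deg_attach_star_center : 0 < k -> deg G (inr None) = k.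
Proof.
move=> k_gt0; rewrite /deg card_sum_pred card_option_pred !inE /=.
rewrite (eq_card_trans (card1 v)) ?(eq_card_trans (card_ord k.-1)) ?add1n ?prednK //.
all: by move=> ?; rewrite !inE.
Qed.

Lemma deg_attach_star_root : deg G (inl v) = (deg e v).+1.
Proof.
rewrite /deg card_sum_pred card_option_pred !inE /= eqxx.
rewrite (eq_card_trans (card0 'I_k.-1)) => [|?]; last by rewrite !inE.
by rewrite addn1; congr _.+1; apply: eq_card => a; rewrite !inE.
Qed.

Definition star_code (A : {set V}) (j0 : 'I_k.-1) : {set V + option 'I_k.-1} :=
  [set x | match x with inl a => a \in A | inr None => true | inr (Some j) => j != j0 end].

Lemma card_star_code A j0 : #|star_code A j0| = #|A| + k.-1.
Proof.
have k1_gt0 : 0 < k.-1 by apply: leq_ltn_trans (leq0n j0) (ltn_ord j0).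
rewrite card_sum_pred card_option_pred !inE /= add1n.
rewrite (eq_card_trans (cardC1 j0)) ?card_ord ?prednK //; last by move=> ?; rewrite !inE.
by congr (_ + _); apply: eq_card => a; rewrite !inE.
Qed.

Lemma star_code_is_id_code (A : {set V}) (j0 : 'I_k.-1) :
  2 < k -> v \in A ->
  (forall a, cnbhd e a :&: A != set0) ->
  {in predC1 v &, injective (fun a => cnbhd e a :&: A)} ->
  is_id_codeb G (star_code A j0).
Proof.
move=> k_gt2 vA domA idA.
have [j1 j1j0] : exists j1 : 'I_k.-1, j1 != j0.
  have : 0 < #|predC1 j0| by rewrite cardC1 card_ord; lia.
  by case/card_gt0P => j1; exists j1.
apply/is_id_codebP; split.
  case=> [a|j]; apply/set0Pn.
    have /set0Pn[w] := domA a; rewrite !inE => /andP[aw wA].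
    by exists (inl w); rewrite !inE /= aw.
  by exists (inr None); case: j => [j|]; rewrite !inE.
move=> x y /setP sameC.
case: x y sameC => [a|[i|]] [b|[j|]] sameC //.
- have same_v : (a == v) = (b == v) by have := sameC (inr None); rewrite !inE /= !andbT.
  case: (eqVneq a v) same_v => [-> /esym/eqP -> // | av /esym/negbT bv].
  congr inl; apply: idA => //; apply/setP => w.
  by have := sameC (inl w); rewrite !inE.
- have /set0Pn[w] := domA a; rewrite !inE => /andP[aw wA].
  by have := sameC (inl w); rewrite !inE /= aw wA.
- by have := sameC (inr (Some j1)); rewrite !inE /= j1j0.
- have /set0Pn[w] := domA b; rewrite !inE => /andP[bw wA].
  by have := sameC (inl w); rewrite !inE /= bw wA.
- case: (eqVneq i j) => [-> // | ij].
  have := sameC (inr (Some i)); have := sameC (inr (Some j)).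
  rewrite !inE /= !(inj_eq (@inr_inj _ _)) !(inj_eq (@Some_inj _)) !orbF !eq_refl.
  rewrite [j == i]eq_sym (negbTE ij) /=.
  by move=> /esym/negbFE/eqP jj0 /negbFE/eqP ij0; rewrite ij0 jj0 eqxx in ij.
- by have := sameC (inl v); rewrite !inE /= eqxx vA.
- by have := sameC (inr (Some j1)); rewrite !inE /= j1j0.
- by have := sameC (inl v); rewrite !inE /= eqxx vA.
Qed.

Lemma card_star_code_compl A j0 : #|star_code A j0| + (#|~: A| + 1) = gorder G.
Proof.
have k_gt0 : 0 < k by case: k j0 => [[]|].
by rewrite card_star_code addnACA cardsC addn1 prednK // gorder_attach_star.
Qed.

End AttachStar.

Lemma leq_mul_subn1 g m n D : g + m <= n -> n <= m * D -> g * D <= (D - 1) * n.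
Proof. nia. Qed.

Lemma all_iota_ord n (P : pred nat) : all P (iota 0 n) -> forall x : 'I_n, P x.
Proof. by move/allP=> Pall x; apply: Pall; rewrite mem_iota ltn_ord. Qed.

Lemma has_iota_ord n (P : pred nat) : has P (iota 0 n) -> exists x : 'I_n, P x.
Proof. by case/hasP=> x; rewrite mem_iota => x_lt_n Px; exists (Ordinal x_lt_n). Qed.

Lemma card_ord_count n (A : {pred 'I_n}) (P : pred nat) :
  (forall x : 'I_n, (x \in A) = P x) -> #|A| = count P (iota 0 n).
Proof.
move=> AP; rewrite cardE /enum_mem size_filter -enumT -val_enum_ord count_map.
exact: eq_count.
Qed.

(* [T3] on the underlying naturals: unlike finsets and [ord_enum], the checks
   below stated over [iota 0 10] evaluate under [vm_compute]. *)
Definition T3_adj : rel nat :=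
  fun a b => ((a, b) \in T3_edges) || ((b, a) \in T3_edges).

Definition T3_code_seq (v : nat) : seq nat :=
  match v with
  | 0 => [:: 0; 3; 4; 5; 7; 8]
  | 1 => [:: 1; 2; 5; 6; 8; 9]
  | 2 => [:: 0; 2; 5; 6; 8; 9]
  | 3 => [:: 0; 2; 3; 4; 5; 7; 8]
  | 4 | 5 => [:: 0; 2; 4; 5; 8; 9]
  | 6 => [:: 0; 2; 4; 6; 8; 9]
  | 7 | 8 => [:: 0; 2; 5; 6; 7; 8]
  | _ => [:: 0; 2; 5; 6; 7; 9]
  end.

Definition T3_code (v : 'I_10) : {set 'I_10} := [set x | val x \in T3_code_seq v].

Lemma T3_code_root v : v \in T3_code v.
Proof.
have root : all (fun v => v \in T3_code_seq v) (iota 0 10) by vm_compute.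
by rewrite inE; apply: (all_iota_ord root).
Qed.

Lemma T3_code_dominating v a : cnbhd T3 a :&: T3_code v != set0.
Proof.
have dom : all (fun v => all (fun a => has (fun w =>
    (w \in T3_code_seq v) && ((w == a) || T3_adj a w)) (iota 0 10)) (iota 0 10)) (iota 0 10).
  by vm_compute.
have /has_iota_ord[w] := all_iota_ord (all_iota_ord dom v) a.
by move=> wAa; apply/set0Pn; exists w; rewrite !inE andbC.
Qed.

Lemma T3_code_identifies v :
  {in predC1 v &, injective (fun a => cnbhd T3 a :&: T3_code v)}.
Proof.
have sep : all (fun v => all (fun a => all (fun b => [&& a != v, b != v & a != b] ==>
    has (fun w => (w \in T3_code_seq v) &&
                  (((w == a) || T3_adj a w) != ((w == b) || T3_adj b w))) (iota 0 10))
    (iota 0 10)) (iota 0 10)) (iota 0 10).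
  by vm_compute.
move=> a b; rewrite !inE => av bv /setP same; apply/eqP; apply: contraT => ab.
have /implyP/(_ _)/has_iota_ord[|w /andP[wA]] :=
  all_iota_ord (all_iota_ord (all_iota_ord sep v) a) b; first exact/and3P.
by have := same w; rewrite !inE wA !andbT => ->; rewrite eqxx.
Qed.

Lemma T3_code_compl_size v :
  3 <= #|~: T3_code v| /\ (3 <= deg T3 v) || (4 <= #|~: T3_code v|).
Proof.
have size_ok : all (fun v => let c := count (fun x => x \notin T3_code_seq v) (iota 0 10) in
    (3 <= c) && ((3 <= count (T3_adj v) (iota 0 10)) || (4 <= c))) (iota 0 10).
  by vm_compute.
rewrite /deg (@card_ord_count _ _ (fun x => x \notin T3_code_seq v)) => [|x]; last first.
  by rewrite !inE.
rewrite (@card_ord_count _ _ (T3_adj v)) => [|x]; last by rewrite !inE.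
by have /andP[] := all_iota_ord size_ok v.
Qed.

Theorem mainTheorem11 (v : 'I_10) (DeltaS : nat) :
  3 <= DeltaS ->
  3 <= maxdeg (attach_star T3 v DeltaS) ->
  gammaID (attach_star T3 v DeltaS) * maxdeg (attach_star T3 v DeltaS)
    <= (maxdeg (attach_star T3 v DeltaS) - 1) * gorder (attach_star T3 v DeltaS).
Proof.
move=> DeltaS_ge3 _.
have DeltaS_gt0 : 0 < DeltaS by lia.
have j0_lt : 0 < DeltaS.-1 by lia.
have idC := star_code_is_id_code (Ordinal j0_lt) DeltaS_ge3 (T3_code_root v)
  (T3_code_dominating v) (@T3_code_identifies v).
apply: (@leq_mul_subn1 _ (#|~: T3_code v| + 1)).
  by rewrite -(card_star_code_compl T3 v (T3_code v) (Ordinal j0_lt)) leq_add2r gammaID_le_card.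
have := leq_deg_maxdeg (attach_star T3 v DeltaS) (inr None).
have := leq_deg_maxdeg (attach_star T3 v DeltaS) (inl v).
rewrite deg_attach_star_center // deg_attach_star_root gorder_attach_star // card_ord.
have [compl_ge3 /orP[deg_ge3 | compl_ge4]] := T3_code_compl_size v; nia.
Qed.
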